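(* Fix a slot $n$, a state $(\mathbf x(n),\mathbf g(n))$ of the model in the context, and a policy $\pi\in\Pi_{n-1}$ choosing the withdrawal vector $\mathbf y(n)$ at slot $n$. Let $\mathbf D=\mathbf y^{MB}(n)-\mathbf y(n)$ and let $F=\{f: D_f\ge+1\}$ and $T=\{t:D_t\le-1\}$, assumed non-empty. Then there exist $f\in F$ and $t\in T$ such that the interchange $\mathbf I(f,t)$ is feasible.
   Context: Model: real queues $1,\dots,L$, dummy queue $0$, $K$ identical servers. State: queue lengths $x_i(n)\in\mathbb Z_+$ ($x_0=0$), connectivities $g_{i,j}(n)\in\{0,1\}$ ($g_{0,j}=1$). A scheduling control $\mathbf q\in\{0,\dots,L\}^K$ (server $j$ serves $q_j$, $0$ = idle) is feasible if $g_{q_j,j}=1$ for all $j$ and each real queue $i$ gets at most $x_i$ servers; withdrawal vector $y_i=\#\{j:q_j=i\}$; feasible withdrawal vectors arise from feasible controls. A policy chooses at each slot a feasible withdrawal vector as a measurable function of history. Updated sizes $\hat x_i=x_i-y_i$; imbalance index $\kappa_t=\sum_{i=1}^{L}\sum_{j=i+1}^{L+1}(\hat x_{[i]}-\hat x_{[j]})$ with $[1],\dots,[L]$ ordering the real queues by non-increasing $\hat x$, $[L+1]=0$. MB property at slot $t$: the chosen vector minimizes $\kappa_t$ over feasible vectors; an MB policy has it at every slot; $\Pi_{n-1}$ = policies having it at all slots $t\le n-1$. $\mathbf y^{MB}(n)$ is the vector chosen by an MB policy at slot $n$ in the same state. Interchange $\mathbf I(f,t)$ ($f\ne t$): $+1$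 at $f$, $-1$ at $t$, $0$ elsewhere; feasible if $\mathbf y(n)+\mathbf I(f,t)$ is a feasible withdrawal vector. *)

From HB Require Import structures.
From mathcomp Require Import all_boot all_order all_algebra.
Set Implicit Arguments. Unset Strict Implicit. Unset Printing Implicit Defensive.
Import Order.TTheory GRing.Theory Num.Theory.
Local Open Scope ring_scope.

(* Queues are indexed by 'I_L.+1 : index 0 is the dummy queue, 1..L the real
   queues.  Servers are indexed by 'I_K.
   x : 'I_L.+1 -> nat   queue lengths (x ord0 = 0)
   g : 'I_L.+1 -> 'I_K -> bool   connectivities (g ord0 j = true)
   A scheduling control is q : 'I_K -> 'I_L.+1 (server j serves q j). *)

Definition is_state (L K : nat) (x : 'I_L.+1 -> nat) (g : 'I_L.+1 -> 'I_K -> bool) : Prop :=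
  x ord0 = 0%N /\ forall j, g ord0 j = true.

Definition withdraw (L K : nat) (q : 'I_K -> 'I_L.+1) (i : 'I_L.+1) : nat :=
  #|[pred j | q j == i]|.

Definition feasible_control (L K : nat) (x : 'I_L.+1 -> nat)
  (g : 'I_L.+1 -> 'I_K -> bool) (q : 'I_K -> 'I_L.+1) : Prop :=
  (forall j, g (q j) j) /\
  (forall i : 'I_L.+1, i != ord0 -> (withdraw q i <= x i)%N).

(* withdrawal vectors are taken integer valued (so that y + I(f,t) makes sense) *)
Definition feasible_wv (L K : nat) (x : 'I_L.+1 -> nat)
  (g : 'I_L.+1 -> 'I_K -> bool) (y : 'I_L.+1 -> int) : Prop :=
  exists q : 'I_K -> 'I_L.+1,
    feasible_control x g q /\ forall i, y i = (withdraw q i)%:Z.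

Definition kappa (L : nat) (x : 'I_L.+1 -> nat) (y : 'I_L.+1 -> int) : int :=
  let xhat := fun i => (x i)%:Z - y i in
  let s := sort (fun a b : int => b <= a)
                [seq xhat i | i <- enum 'I_L.+1 & i != ord0] ++ [:: 0] in
  \sum_(i < L) \sum_(j < L.+1 | (i < j)%N) (nth 0 s i - nth 0 s j).

Definition MB_choice (L K : nat) (x : 'I_L.+1 -> nat)
  (g : 'I_L.+1 -> 'I_K -> bool) (y : 'I_L.+1 -> int) : Prop :=
  feasible_wv x g y /\ forall v, feasible_wv x g v -> kappa x y <= kappa x v.

Definition interchange (L : nat) (f t : 'I_L.+1) : 'I_L.+1 -> int :=
  fun i => (i == f)%:Z - (i == t)%:Z.

Definition interchange_feasible (L K : nat) (x : 'I_L.+1 -> nat)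
  (g : 'I_L.+1 -> 'I_K -> bool) (y : 'I_L.+1 -> int) (f t : 'I_L.+1) : Prop :=
  f != t /\ feasible_wv x g (fun i => y i + interchange f t i).

From Pilot Require Import Defs.
From HB Require Import structures.
From mathcomp Require Import all_boot all_order all_algebra.
From mathcomp Require Import zify.
Set Implicit Arguments. Unset Strict Implicit. Unset Printing Implicit Defensive.
Import Order.TTheory GRing.Theory Num.Theory.

(* Write y and yMB as withdrawal vectors of feasible controls q and q'.  Since
   yMB serves t less than y, some server j serves t under q but not under q'.
   Reassigning j to its q'-queue u keeps the control feasible for the
   connectivities and moves one unit from t to u; if q' serves u more than q,
   we stop with f = u, otherwise we repeat from u.  Each step lowers the number
   of servers on which the control and q' disagree, so the walk terminates. *)

Lemma card_update (T : finType) (P P' : pred T) (j : T) :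
  (forall k, k != j -> P' k = P k) -> (#|P'| + P j = #|P| + P' j)%N.
Proof.
move=> eqPP'; rewrite (cardD1 j P') (cardD1 j P).
have -> : #|[predD1 P' & j]| = #|[predD1 P & j]|.
  apply: eq_card => k; rewrite !inE.
  by case: (eqVneq k j) => //= /eqPP'; rewrite /in_mem /= => ->.
by rewrite /in_mem /=; case: (P' j); case: (P j) => /=; lia.
Qed.

Section Exchange.

Variables L K : nat.
Implicit Types (q : 'I_K -> 'I_L.+1) (i t : 'I_L.+1).

Definition reassign q (j : 'I_K) (v : 'I_L.+1) : 'I_K -> 'I_L.+1 :=
  fun k => if k == j then v else q k.

Lemma withdraw_reassign q j v i :
  (withdraw (reassign q j v) i + (q j == i) = withdraw q i + (v == i))%N.
Proof.
have := @card_update _ [pred k | q k == i] [pred k | reassign q j v k == i] j.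
by rewrite /= /reassign eqxx; apply=> k /negbTE ->.
Qed.

Definition disagreement q q' := #|[pred k | q k != q' k]|.

Lemma disagreement_reassign q q' j :
  q j != q' j -> (disagreement (reassign q j (q' j)) q').+1 = disagreement q q'.
Proof.
move=> qj_neq; rewrite /disagreement.
have := @card_update _ [pred k | q k != q' k] [pred k | reassign q j (q' j) k != q' k] j.
rewrite /= /reassign !eqxx qj_neq /= addn0 addn1 => -> //.
by move=> k /negbTE ->.
Qed.

Lemma withdraw_exchange q q' t :
  (withdraw q' t < withdraw q t)%N ->
  exists f q2, [/\ (withdraw q f < withdraw q' f)%N,
    forall k, q2 k = q k \/ q2 k = q' k &
    forall i, (withdraw q2 i + (i == t) = withdraw q i + (i == f))%N].
Proof.
have [n] := ubnP (disagreement q q'); elim: n q t => // n IHn q t ltn lt_t.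
have [j /andP[/eqP qj_t q'j_t]] : exists j, (q j == t) && (q' j != t).
  apply/existsP; apply: contraLR lt_t; rewrite negb_exists -leqNgt => /forallP H.
  apply: subset_leq_card; apply/subsetP => k; rewrite !inE => /eqP qk_t.
  by move: (H k); rewrite qk_t eqxx /= negbK.
set u := q' j; have W1 := withdraw_reassign q j u; rewrite qj_t in W1.
set q1 := reassign q j u in W1 *.
have t_neq_u : (t == u) = false by rewrite eq_sym (negbTE q'j_t).
have q1_mix k : q1 k = q k \/ q1 k = q' k.
  by rewrite /q1 /reassign; case: (eqVneq k j) => [->|_]; [right|left].
have [lt_u | ge_u] := ltnP (withdraw q u) (withdraw q' u).
  exists u, q1; split=> // i; rewrite (eq_sym i t) (eq_sym i u); exact: W1.
have lt_u1 : (withdraw q' u < withdraw q1 u)%N.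
  by have := W1 u; rewrite eqxx t_neq_u; lia.
have ltn1 : (disagreement q1 q' < n)%N.
  by rewrite -ltnS disagreement_reassign // qj_t eq_sym.
have [f [q2 [lt_f q2_mix W2]]] := IHn _ _ ltn1 lt_u1.
have f_neq_t : f != t.
  by apply/eqP=> eq_ft; move: (W1 t) lt_f; rewrite eq_ft eqxx eq_sym t_neq_u; lia.
exists f, q2; split.
- by have := W1 f; rewrite eq_sym (negbTE f_neq_t); lia.
- by move=> k; case: (q2_mix k) => ->; [exact: q1_mix | right].
- by move=> i; have := W2 i; have := W1 i; rewrite (eq_sym t) (eq_sym u); lia.
Qed.

End Exchange.

Local Open Scope ring_scope.

Theorem mainTheorem13 (L K : nat) (x : 'I_L.+1 -> nat) (g : 'I_L.+1 -> 'I_K -> bool)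
  (y yMB : 'I_L.+1 -> int) :
  is_state x g ->
  feasible_wv x g y ->
  MB_choice x g yMB ->
  let D := fun i => yMB i - y i in
  (exists f, 1 <= D f) ->
  (exists t, D t <= -1) ->
  exists f t, [/\ 1 <= D f, D t <= -1 & interchange_feasible x g y f t].
Proof.
move=> _ [q [[conn_q cap_q] yE]] [[q' [[conn_q' cap_q'] yMBE]] _] D _ [t Dt].
have lt_t : (withdraw q' t < withdraw q t)%N by move: Dt; rewrite /D yE yMBE; lia.
have [f [q2 [lt_f mix W]]] := withdraw_exchange lt_t.
have f_neq_t : f != t by apply/eqP=> eq_ft; move: lt_f lt_t; rewrite eq_ft; lia.
exists f, t; split=> //; first by rewrite /D yE yMBE; lia.
split=> //; exists q2; split; first split.
- by move=> k; case: (mix k) => ->.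
- move=> i i_neq0; have := W i; have := cap_q i i_neq0; have := cap_q' i i_neq0.
  by case: (eqVneq i f) => [->|_]; rewrite ?(negbTE f_neq_t) /=; case: (i == t); lia.
- move=> i; rewrite yE /Defs.interchange; have := W i.
  by case: (i == f); case: (i == t) => /=; lia.
Qed.
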